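(* Consider the following stochastic evolution model. A finite domain $M_d$ (a ball of diameter $d$) of a convex, normal, balanced planar mosaic is described by $J+1$ nonnegative combinatorial counting variables $X_0,X_1,\dots,X_J$ (with $X_0=N^{\star}$, the total corner degree), each of which grows as $X_j\asymp d^2$ as $d\to\infty$; write $x_j=X_j/X_0$ for $j=1,\dots,J$ and $\underline{x}=(x_1,\dots,x_J)$. The evolution is driven by micro-events of $I+1$ types $R_0,\dots,R_I$. Events of type $R_i$ are triggered by clocks, the number of which is $C_i=\sum_{j=0}^J C_{i,j}X_j$ (with given deterministic coefficients $C_{i,j}$); each individual clock of type $R_i$ gives signals at the times of independent exponential random variables with parameter $\lambda_i>0$. When a micro-event of type $R_i$ occurs, each $X_j$ changes by a deterministic increment $\Delta X_j(i)$. Define $\gamma_i(\underline{x})=C_i\lambda_i/X_0$, $\gamma(\underline{x})=\sum_{i=0}^I\gamma_i(\underline{x})$, $p_i(\underline{x})=\gamma_i(\underline{x})/\gamma(\underline{x})$, $\nu_j(\underline{x})=\sum_{i=0}^I\Delta X_j(i)\,p_i(\underline{x})$ for $j=0,\dots,J$, and $\hat x_j(\underline{x})=\nu_j(\underline{x})/\nu_0(\underline{x})$. Assume that at time $t$ the (deterministic) state of the mosaic is given by $\underline{x}=(x_1(t),\dots,x_J(t))$, and let $\underline{\mathbf{x}}(t+\Delta t)=(\mathbf{x}_1(t+\Delta t),\dots,\mathbf{x}_J(t+\Delta t))$ denote the random state at time $t+\Delta t$. Consider a simultaneous limit parametrized by $\rho\to\infty$ in which $d(\rho)\to\infty$, $\Delta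 t(\rho)\to 0$ and $d(\rho)\,\Delta t(\rho)$ is constant in $\rho$. Then in this limit, for each $j=1,\dots,J$, the random variables $$\frac{\mathbf{x}_j(t+\Delta t)-x_j(t)}{\Delta t}$$ converge in probability to $$\gamma(\underline{x})\cdot\nu_0(\underline{x})\cdot\bigl(\hat x_j(\underline{x})-x_j\bigr),$$ i.e. to the right-hand side of the ODE $\frac{dx_j}{dt}=\gamma(\underline{x})\,\nu_0(\underline{x})\,(\hat x_j(\underline{x})-x_j)$.
   Context: A mosaic is a tessellation of the plane by convex polygonal cells; ''balanced'' (in the sense of Grünbaum–Shephard) means in particular that counts of cells, nodes and corner degrees in a ball of diameter $d$ are all of order $d^2$. Notation $f\asymp g$ means $C^{-1}g\le f\le Cg$ for a constant $C>0$ independent of $d$. The corner degree $N^{\star}$ is the sum over cells of the number of their regular vertices (points where two edges of the cell meet at an angle different from $\pi$), averaged with the analogous sum over nodes. The cumulative process of all micro-events is a Poisson process whose expected interarrival time $E(\Delta\mathbf{T})$ satisfies $1/E(\Delta\mathbf{T})=\sum_i C_i\lambda_i=X_0\gamma(\underline{x})$. The increments of $X_j$ over $[t,t+\Delta t]$ are the sums of the deterministic increments of all micro-events occurring in that interval. *)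

From HB Require Import structures.
From mathcomp Require Import all_boot all_order all_algebra.
From mathcomp Require Import all_classical all_reals all_analysis.
Set Implicit Arguments. Unset Strict Implicit. Unset Printing Implicit Defensive.
Import Order.TTheory GRing.Theory Num.Theory.
Import numFieldNormedType.Exports.
Local Open Scope classical_set_scope.
Local Open Scope ring_scope.

Section Defs.
Context {R : realType} {d : measure_display} {T : measurableType d}.

Definition is_poisson (P : probability T R) (N : {RV P >-> R}) (mu : R) : Prop :=
  forall k : nat,
    P [set w | N w = k%:R] = (mu ^+ k / (k`!)%:R * expR (- mu))%:E.

Definition mutually_independent (P : probability T R) (n : nat)
    (N : 'I_n -> {RV P >-> R}) : Prop :=
  forall B : 'I_n -> set R, (forall i, measurable (B i)) ->
    P (\bigcap_(i in [set: 'I_n]) (N i @^-1` B i)) =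
    (\prod_(i < n) P (N i @^-1` B i))%E.

Definition cvg_in_prob (P : probability T R) (Y : nat -> T -> R) (c : R) : Prop :=
  forall eps : R, 0 < eps ->
    P [set w | eps <= `|Y n w - c|] @[n --> \oo] --> 0%E.

End Defs.

(* Indices: j : 'I_J.+1 for the
   variables X_0..X_J, i : 'I_I.+1 for the event types R_0..R_I.
   xe x is the extended state (x_0 = X_0/X_0 = 1, x_1, ..., x_J). *)
Section Model.
Context {R : realType} (I J : nat).
Variables (Ccoef : 'I_I.+1 -> 'I_J.+1 -> R) (lambda : 'I_I.+1 -> R)
          (DeltaX : 'I_I.+1 -> 'I_J.+1 -> int).

Definition xe (x : 'I_J -> R) (j : 'I_J.+1) : R :=
  match unlift ord0 j with Some j' => x j' | None => 1 end.

Definition clocks (X : 'I_J.+1 -> R) (i : 'I_I.+1) : R :=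
  \sum_(j < J.+1) Ccoef i j * X j.

(* gamma_i(x) = C_i lambda_i / X_0, written in terms of x_j = X_j / X_0 *)
Definition gamma_i (x : 'I_J -> R) (i : 'I_I.+1) : R :=
  clocks (xe x) i * lambda i.

Definition gamma (x : 'I_J -> R) : R := \sum_(i < I.+1) gamma_i x i.

Definition p_i (x : 'I_J -> R) (i : 'I_I.+1) : R := gamma_i x i / gamma x.

Definition nu (x : 'I_J -> R) (j : 'I_J.+1) : R :=
  \sum_(i < I.+1) (DeltaX i j)%:~R * p_i x i.

Definition xhat (x : 'I_J -> R) (j : 'I_J.+1) : R := nu x j / nu x ord0.

End Model.

(* Over the time step the number N_i of events of type R_i is Poisson with mean
   K gamma_i(x), where K = X_0 Dt >= c^-1 d^2 Dt = c^-1 kappa d tends to infinity.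
   A Chernoff bound, computed with the Poisson moment generating function, makes
   N_i / K concentrate at gamma_i(x) with error probability exponentially small
   in K.  The difference quotient of x_j is an explicit rational function of
   the ratios N_i / K and of Dt, continuous at (gamma(x), 0) where it equals
   sum_i gamma_i(x) (DeltaX_j(i) - x_j DeltaX_0(i)) = gamma nu_0 (xhat_j - x_j).
   A union bound over the finitely many event types concludes. *)

From HB Require Import structures.
From mathcomp Require Import all_boot all_order all_algebra.
From mathcomp Require Import all_classical all_reals all_analysis.
From mathcomp Require Import measurable_realfun ring lra.
Set Implicit Arguments. Unset Strict Implicit. Unset Printing Implicit Defensive.
Import Order.TTheory GRing.Theory Num.Theory.
Import numFieldNormedType.Exports.
Local Open Scope classical_set_scope.
Local Open Scope ring_scope.

Lemma chernoff_exponents {R : realType} (g del : R) : 0 <= g -> 0 < del ->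
  let s := del / (4 * (g + del)) in
  - (s * (g + del)) + g * (expR s - 1) <= - (s * del / 2) /\
  s * (g - del) + g * (expR (- s) - 1) <= - (s * del / 2).
Proof.
move=> g0 del0 s.
have s_def : s * (4 * (g + del)) = del by rewrite divfK // gt_eqF //; lra.
have s0 : 0 < s by rewrite divr_gt0 //; lra.
have gs : g * s <= del / 4 by nra.
have s_le : s <= 1 / 4 by nra.
have expRsN : expR s * expR (- s) = 1 := expRxMexpNx_1 s.
have u_ge := expR_ge1Dx s.
have w_ge := expR_ge1Dx (- s).
have w_gt0 := expR_gt0 (- s).
have u_gt0 := expR_gt0 s.
set u := expR s in expRsN u_ge u_gt0 *; set w := expR (- s) in expRsN w_ge w_gt0 *.
have u_le : u * (1 - s) <= 1 by nra.
have w_le : w * (1 + s) <= 1 by nra.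
split.
- have h1 : u - 1 - s <= s ^+ 2 * (4 / 3) by nra.
  have : g * (u - 1 - s) <= g * (s ^+ 2 * (4 / 3)) by exact: ler_wpM2l.
  nra.
- have h2 : w - 1 + s <= s ^+ 2 by nra.
  have : g * (w - 1 + s) <= g * s ^+ 2 by exact: ler_wpM2l.
  nra.
Qed.

Lemma measurable_inv {R : realType} : measurable_fun setT (@GRing.inv R).
Proof.
rewrite -(setUv [set (0 : R)]); apply/measurable_funU => //; first exact: measurableC.
split; first exact: measurable_fun_set1.
apply: open_continuous_measurable_fun.
  by rewrite openC; apply: accessible_closed_set1; apply: hausdorff_accessible.
by move=> x /set_mem /eqP x0; exact: inv_continuous.
Qed.

Lemma measurable_dev {R : realType} {d : measure_display} {S : measurableType d}
  (f : S -> R) (a t : R) :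
  measurable_fun setT f -> measurable [set w | t <= `|f w - a|].
Proof.
move=> mf; have -> : [set w | t <= `|f w - a|] = (fun w => `|f w - a|) @^-1` `[t, +oo[.
  by apply/seteqP; split => w /=; rewrite in_itv /= andbT.
rewrite -[X in measurable X]setTI; apply: (_ : measurable_fun setT _) => //.
by apply: measurableT_comp => //; exact: measurable_funB.
Qed.

Lemma measurable_count_quotient {R : realType} {d : measure_display}
  {T : measurableType d} n (N : 'I_n -> T -> R) (a b : 'I_n -> R) (p q x D : R) :
  (forall i, measurable_fun setT (N i)) ->
  measurable_fun setT (fun w =>
    ((p + \sum_(i < n) N i w * b i) / (q + \sum_(i < n) N i w * a i) - x) / D).
Proof.
move=> mN; have mlin (c : 'I_n -> R) r :
    measurable_fun setT (fun w => r + \sum_(i < n) N i w * c i).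
  by apply: measurable_funD => //; apply: measurable_sum => i; exact: measurable_funM.
apply: measurable_funM => //; apply: measurable_funB => //.
by apply: measurable_funM => //; exact: measurableT_comp measurable_inv (mlin _ _).
Qed.

Section poisson_concentration.
Context {R : realType} {d : measure_display} {T : measurableType d}
  (P : probability T R).

(* Unlike the library's [poisson_pmf], this is also the law of [is_poisson] at
   rate [0]. *)
Definition poisson_mass (mu : R) (k : nat) : R := mu ^+ k / k`!%:R * expR (- mu).

Lemma poisson_mass_ge0 mu k : 0 <= mu -> 0 <= poisson_mass mu k.
Proof. by move=> mu0; rewrite mulr_ge0 ?expR_ge0 // divr_ge0 // exprn_ge0. Qed.

Lemma expR_eseries (y : R) :
  (\sum_(0 <= k <oo) (y ^+ k / k`!%:R)%:E)%E = (expR y)%:E.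
Proof.
rewrite /expR -EFin_lim; last exact: is_cvg_series_exp_coeff.
by apply/congr_lim/funext => n /=; rewrite /series /= -sumEFin.
Qed.

Lemma poisson_mgf mu s : 0 <= mu ->
  (\sum_(0 <= k <oo) (poisson_mass mu k * expR (s * k%:R))%:E)%E =
  (expR (mu * (expR s - 1)))%:E.
Proof.
move=> mu0.
under eq_eseriesr => k _.
  rewrite (_ : _ * _ = expR (- mu) * ((mu * expR s) ^+ k / k`!%:R)); last first.
    rewrite /poisson_mass expRM_natr exprMn.
    by field; rewrite pnatr_eq0 -lt0n fact_gt0.
  rewrite EFinM; over.
rewrite nneseriesZl /=; last first.
  by move=> k _; rewrite lee_fin divr_ge0 // exprn_ge0 // mulr_ge0 // expR_ge0.
rewrite expR_eseries -EFinM -expRD; congr (expR _)%:E; lra.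
Qed.

Lemma poisson_mass_eseries mu : 0 <= mu ->
  (\sum_(0 <= k <oo) (poisson_mass mu k)%:E)%E = 1%E.
Proof.
move=> mu0; have := poisson_mgf 0 mu0; rewrite expR0 subrr mulr0 expR0 => <-.
by apply: eq_eseriesr => k _; rewrite mul0r expR0 mulr1.
Qed.

(* [is_poisson] only fixes the masses of the events [N = k]; as these sum to
   [1], [N] is almost surely integer valued. *)
Lemma is_poisson_preimage (N : {RV P >-> R}) mu (Q : set R) :
  0 <= mu -> is_poisson N mu -> measurable Q ->
  P (N @^-1` Q) = (\sum_(k <oo | k%:R \in Q) (poisson_mass mu k)%:E)%E.
Proof.
move=> mu0 hN mQ.
pose E k := N @^-1` [set k%:R].
have mE k : measurable (E k) by exact: measurable_funPTI.
have tE D : trivIset D E.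
  apply/trivIsetP => i k _ _ ik; apply/seteqP; split => // w [Eiw Ekw].
  by move: ik; rewrite -(eqr_nat R) -Eiw -Ekw eqxx.
pose U := \bigcup_k E k.
have mU : measurable U by exact: bigcupT_measurable.
have PUC : P (~` U) = 0%E.
  rewrite probability_setC // measure_semi_bigcup //.
  by rewrite (eq_eseriesr (fun k _ => hN k)) poisson_mass_eseries // subee.
have mNQ : measurable (N @^-1` Q) by exact: measurable_funPTI.
pose D := [set k : nat | Q k%:R].
have -> : N @^-1` Q = \bigcup_(k in D) E k `|` (N @^-1` Q `&` ~` U).
  apply/seteqP; split => [w Qw|w [[k Dk Ekw]|[]//]]; last by rewrite /preimage /= Ekw.
  have [[k _ Ekw]|] := pselect (U w); last by right.
  by left; exists k => //; rewrite /D /= -Ekw.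
have mB : measurable (N @^-1` Q `&` ~` U) by exact: measurableI (measurableC mU).
rewrite measureU0 //; last exact: subset_measure0 mB (measurableC mU) (@subIsetr _ _ _) PUC.
  by rewrite measure_bigcup //; apply: eq_eseriesr => k _; exact: hN.
exact: bigcup_measurable.
Qed.

Lemma is_poisson_le_eseries (N : {RV P >-> R}) mu (Q : set R) (g : nat -> R) :
  0 <= mu -> is_poisson N mu -> measurable Q ->
  (forall k, 0 <= g k) -> (forall k : nat, Q k%:R -> 1 <= g k) ->
  (P (N @^-1` Q) <= \sum_(0 <= k <oo) (poisson_mass mu k * g k)%:E)%E.
Proof.
move=> mu0 hN mQ g0 gQ; rewrite (is_poisson_preimage mu0 hN mQ) eseries_mkcond.
apply: lee_nneseries => [k _ _|k _]; first by case: ifP; rewrite // lee_fin poisson_mass_ge0.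
have m0 := poisson_mass_ge0 k mu0.
case: ifPn => [/set_mem /gQ g1|_]; rewrite lee_fin; first exact: ler_peMr.
exact: mulr_ge0.
Qed.

Lemma poisson_chernoff (N : {RV P >-> R}) (mu t s : R) :
  0 <= mu -> is_poisson N mu -> 0 <= s ->
  (P [set w | (t <= `|N w - mu|)%R] <=
   (expR (- (s * (mu + t)) + mu * (expR s - 1)) +
    expR (s * (mu - t) + mu * (expR (- s) - 1)))%:E)%E.
Proof.
move=> mu0 hN s0.
pose g (k : nat) := expR (s * (k%:R - (mu + t))) + expR (s * (mu - t - k%:R)).
have g0 k : 0 <= g k by rewrite addr_ge0 // expR_ge0.
have gQ k : t <= `|k%:R - mu| -> 1 <= g k.
  have exp_ge1 (x : R) : 0 <= x -> 1 <= expR x by move=> x0; have := expR_ge1Dx x; lra.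
  have e1 := expR_ge0 (s * (k%:R - (mu + t))); have e2 := expR_ge0 (s * (mu - t - k%:R)).
  rewrite ler_normr => /orP[h|h].
  - by have := exp_ge1 _ (mulr_ge0 s0 (_ : 0 <= k%:R - (mu + t))); rewrite /g; lra.
  - by have := exp_ge1 _ (mulr_ge0 s0 (_ : 0 <= mu - t - k%:R)); rewrite /g; lra.
have := is_poisson_le_eseries mu0 hN (measurable_dev mu t (@measurable_id _ _ setT)) g0 gQ.
move/le_trans; apply.
have split_g k : poisson_mass mu k * g k =
    expR (- (s * (mu + t))) * (poisson_mass mu k * expR (s * k%:R)) +
    expR (s * (mu - t)) * (poisson_mass mu k * expR (- s * k%:R)).
  by rewrite mulrDr; congr (_ + _); rewrite mulrCA -expRD; congr (_ * expR _); ring.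
have term_ge0 (c s' : R) k : (0 <= (expR c * (poisson_mass mu k * expR (s' * k%:R)))%:E)%E.
  by rewrite lee_fin mulr_ge0 ?expR_ge0 // mulr_ge0 ?expR_ge0 ?poisson_mass_ge0.
under eq_eseriesr => k _ do rewrite split_g EFinD.
rewrite nneseriesD /=; [|by move=> *; exact: term_ge0|by move=> *; exact: term_ge0].
under eq_eseriesr => k _ do rewrite EFinM.
under [X in (_ + X)%E]eq_eseriesr => k _ do rewrite EFinM.
rewrite !nneseriesZl /=; [|by move=> *; rewrite lee_fin mulr_ge0 ?expR_ge0 ?poisson_mass_ge0..].
by rewrite !poisson_mgf // -!EFinM -EFinD !expRD.
Qed.

Lemma poisson_ratio_concentration (g del : R) : 0 <= g -> 0 < del ->
  exists2 c : R, 0 < c & forall (N : {RV P >-> R}) (K : R), 0 < K ->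
    is_poisson N (K * g) ->
    (P [set w | (del <= `|N w / K - g|)%R] <= (expR (- (K * c)) *+ 2)%:E)%E.
Proof.
move=> g0 del0; have [upper lower] := chernoff_exponents g0 del0.
set s := del / (4 * (g + del)) in upper lower *.
have s0 : 0 < s by rewrite divr_gt0 //; lra.
exists (s * del / 2); first by rewrite divr_gt0 // mulr_gt0.
move=> N K K0 hN.
have -> : [set w | (del <= `|N w / K - g|)%R] = [set w | (K * del <= `|N w - K * g|)%R].
  have dev w : `|N w / K - g| * K = `|N w - K * g|.
    by rewrite -[X in _ * X](gtr0_norm K0) -normrM mulrBl divfK ?gt_eqF // mulrC.
  by apply/seteqP; split => w /=; rewrite -dev [K * del]mulrC ler_pM2r.
apply: le_trans (poisson_chernoff (K * del) (mulr_ge0 (ltW K0) g0) hN (ltW s0)) _.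
rewrite lee_fin mulr2n lerD // ler_expR.
- have -> : - (s * (K * g + K * del)) + K * g * (expR s - 1) =
            K * (- (s * (g + del)) + g * (expR s - 1)) by ring.
  by rewrite -[X in _ <= X]mulrN ler_pM2l.
- have -> : s * (K * g - K * del) + K * g * (expR (- s) - 1) =
            K * (s * (g - del) + g * (expR (- s) - 1)) by ring.
  by rewrite -[X in _ <= X]mulrN ler_pM2l.
Qed.

Lemma cvg_in_prob_poisson_ratio (N : nat -> {RV P >-> R}) (K : nat -> R) (g : R) :
  0 <= g -> K @ \oo --> +oo -> (forall n, is_poisson (N n) (K n * g)) ->
  cvg_in_prob P (fun n w => N n w / K n) g.
Proof.
move=> g0 hK hN eps eps0; have [c c0 hc] := poisson_ratio_concentration g0 eps0.
apply: (@squeeze_cvge _ _ _ _ (cst 0%E) _ (fun n => (expR (- (K n * c)) *+ 2)%:E)).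
- near=> n; rewrite measure_ge0 /=; apply: hc => //.
  by near: n; exact: (cvgryPgt _).1 hK 0.
- exact: cvg_cst.
apply: cvg_EFin; first exact: nearW.
rewrite -(mul0rn _ 2); apply: cvgMn; apply: cvg_comp _ _ _ (@cvgr_expR R).
apply/cvgryPge => A; near=> n; rewrite -ler_pdivrMr //.
by near: n; exact: (cvgryPge _).1 hK _.
Unshelve. all: end_near. Qed.

End poisson_concentration.

Lemma cvg_in_prob_transfer {R : realType} {d : measure_display} {T : measurableType d}
  (P : probability T R) n (U : 'I_n -> nat -> T -> R) (g : 'I_n -> R)
  (Y : nat -> T -> R) (c : R) :
  (forall i, cvg_in_prob P (U i) (g i)) ->
  (forall i k, measurable_fun setT (U i k)) ->
  (forall k, measurable_fun setT (Y k)) ->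
  (forall eps, 0 < eps -> exists2 del, 0 < del & \forall k \near \oo,
     forall w, (forall i, `|U i k w - g i| < del) -> `|Y k w - c| < eps) ->
  cvg_in_prob P Y c.
Proof.
move=> hU mU mY hY eps eps0; have [del del0 hdel] := hY eps eps0.
pose B i k := [set w | (del <= `|U i k w - g i|)%R].
have mB i k : measurable (B i k) by exact: measurable_dev.
apply: (@squeeze_cvge _ _ _ _ (cst 0%E) _ (fun k => \sum_(i < n) P (B i k))%E).
- near=> k; rewrite measure_ge0 /=.
  pose F m := if insub m is Some i then B i k else set0.
  have -> : (\sum_(i < n) P (B i k) = \sum_(m < n) P (F m))%E.
    by apply: eq_bigr => i _; rewrite /F valK.
  apply: content_subadditive => [m _||w /= bad]; first by rewrite /F; case: insub.
    exact: measurable_dev.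
  have [i Biw] : exists i, B i k w.
    apply: contrapT => /forallNP none; move: bad; rewrite leNgt => /negP; apply.
    by apply: (near hdel k) => // i; rewrite ltNge; apply/negP => /none.
  by rewrite -(bigcup_mkord n F); exists i => //=; rewrite /F valK.
- exact: cvg_cst.
- rewrite [X in _ --> X](_ : _ = \sum_(i < n) (0 : \bar R))%E; last by rewrite big1.
  by apply: cvg_nnesum => i _; [exact: nearW|exact: hU].
Unshelve. all: end_near. Qed.

Section increment_quotient.
Context {R : realFieldType}.

Lemma increment_quotientE (m D x Sa Sb : R) : m != 0 -> D != 0 -> 1 + D * Sa != 0 ->
  ((x * m + m * D * Sb) / (m + m * D * Sa) - x) / D = (Sb - x * Sa) / (1 + D * Sa).
Proof.
move=> m0 D0 q0; rewrite (_ : m + m * D * Sa = m * (1 + D * Sa)); last by ring.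
by field; rewrite q0 m0 D0.
Qed.

Lemma quotient_dev_le (A E D S : R) : 0 <= D -> 1 / 2 <= 1 + D * S ->
  `|(A + E) / (1 + D * S) - A| <= 2 * (`|E| + `|A| * D * `|S|).
Proof.
move=> D0 q2; have q0 : 0 < 1 + D * S by lra.
rewrite (_ : _ - A = (E - A * D * S) / (1 + D * S)); last by field; rewrite gt_eqF.
rewrite normf_div (gtr0_norm q0) ler_pdivrMr //.
have num_le : `|E - A * D * S| <= `|E| + `|A| * D * `|S|.
  by rewrite (le_trans (ler_normB _ _)) // !normrM (ger0_norm D0).
have num_ge0 : 0 <= `|E| + `|A| * D * `|S| by rewrite addr_ge0 // !mulr_ge0.
nra.
Qed.

Lemma sum_mul_dev_le n (u g c : 'I_n -> R) (e : R) : (forall i, `|u i - g i| <= e) ->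
  `|\sum_(i < n) u i * c i - \sum_(i < n) g i * c i| <= e * \sum_(i < n) `|c i|.
Proof.
move=> hu; rewrite -sumrB mulr_sumr; apply: le_trans (ler_norm_sum _ _ _) _.
by apply: ler_sum => i _; rewrite -mulrBl normrM ler_wpM2r.
Qed.

(* [u i] stands for the empirical rate [N_i / (X_0 Dt)] of events of type [i]. *)
Lemma increment_quotient_approx n (a b g : 'I_n -> R) (x eps : R) : 0 < eps ->
  exists2 del, 0 < del & exists2 D0, 0 < D0 &
  forall (m D : R) (u : 'I_n -> R), 0 < m -> 0 < D -> D < D0 ->
    (forall i, `|u i - g i| < del) ->
    `|((x * m + \sum_(i < n) m * D * u i * b i) /
       (m + \sum_(i < n) m * D * u i * a i) - x) / D
      - \sum_(i < n) g i * (b i - x * a i)| < eps.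
Proof.
move=> eps0; set A := \sum_(i < n) _.
pose C1 := \sum_(i < n) `|b i - x * a i|.
pose C2 := `|\sum_(i < n) g i * a i| + \sum_(i < n) `|a i|.
have C10 : 0 <= C1 by rewrite sumr_ge0.
have C20 : 0 <= C2 by rewrite addr_ge0 // sumr_ge0.
have A0 := normr_ge0 A.
exists (Num.min 1 (eps / (4 * (C1 + 1)))); first by rewrite lt_min ltr01 divr_gt0 //; lra.
exists (Num.min (1 / (2 * (C2 + 1))) (eps / (4 * ((`|A| + 1) * (C2 + 1))))).
  by rewrite lt_min !divr_gt0 // ?mulr_gt0 //; lra.
move=> m D u m0 D0; rewrite !lt_min => /andP[DC2 DA] hu.
have [hu1 huC] : (forall i, `|u i - g i| <= 1) /\
                 (forall i, `|u i - g i| <= eps / (4 * (C1 + 1))).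
  by split=> i; have := hu i; rewrite lt_min => /andP[/ltW ? /ltW ?].
pose Sa := \sum_(i < n) u i * a i; pose Sb := \sum_(i < n) u i * b i.
have sum_scale (v : 'I_n -> R) :
    \sum_(i < n) m * D * u i * v i = m * D * \sum_(i < n) u i * v i.
  by rewrite mulr_sumr; apply: eq_bigr => i _; rewrite mulrA.
have Sa_le : `|Sa| <= C2.
  have := sum_mul_dev_le a hu1; rewrite mul1r => dev.
  by rewrite /C2 -[Sa](subrKC (\sum_(i < n) g i * a i)) (le_trans (ler_normD _ _)) // lerD2l.
have E_le : `|Sb - x * Sa - A| <= eps / 4.
  have -> : Sb - x * Sa = \sum_(i < n) u i * (b i - x * a i).
    by rewrite /Sb /Sa mulr_sumr -sumrB; apply: eq_bigr => i _; ring.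
  apply: le_trans (sum_mul_dev_le _ huC) _.
  by rewrite -/C1 mulrAC ler_pdivrMr; nra.
have Sa_lb : - (D * Sa) <= D * C2.
  by rewrite -mulrN ler_wpM2l ?(ltW D0) // (le_trans _ Sa_le) // -normrN ler_norm.
have DC2' : D * (2 * (C2 + 1)) < 1 by rewrite -ltr_pdivlMr // mulr_gt0 //; lra.
have q2 : 1 / 2 <= 1 + D * Sa by nra.
rewrite !sum_scale increment_quotientE ?gt_eqF // ?(lt_le_trans _ q2) //.
rewrite -[Sb - _](subrKC A); apply: le_lt_trans (quotient_dev_le _ _ (ltW D0) q2) _.
have AD0 : 0 <= `|A| * D by rewrite mulr_ge0 // ltW.
have ASa : `|A| * D * `|Sa| <= `|A| * D * C2 by rewrite ler_wpM2l.
have DQ : D * ((`|A| + 1) * (C2 + 1)) < eps / 4.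
  by move: DA; rewrite invfM mulrA -ltr_pdivlMr ?mulr_gt0 //; lra.
nra.
Qed.

End increment_quotient.

Lemma cvgy_mul_of_sqr_le {R : realType} (m D d : nat -> R) (c kap : R) : 0 < c ->
  d @ \oo --> +oo -> (forall n, 0 < D n) -> (forall n, d n * D n = kap) ->
  (forall n, c^-1 * d n ^+ 2 <= m n) -> (fun n => m n * D n) @ \oo --> +oo.
Proof.
move=> c0 hd D0 dD hm.
have [n0 _ /(_ n0 (leqnn _)) d0] := (cvgryPgt _).1 hd 0.
have kap0 : 0 < kap by rewrite -(dD n0) mulr_gt0.
apply/cvgryPge => A; near=> n.
have mD : c^-1 * kap * d n <= m n * D n.
  have -> : c^-1 * kap * d n = c^-1 * d n ^+ 2 * D n by rewrite -(dD n); ring.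
  by rewrite ler_pM2r.
apply: le_trans mD; rewrite -ler_pdivrMl ?mulr_gt0 ?invr_gt0 //.
by near: n; exact: (cvgryPge _).1 hd _.
Unshelve. all: end_near. Qed.

Section mean_field.
Context {R : realType} (I J : nat) (Ccoef : 'I_I.+1 -> 'I_J.+1 -> R)
  (lambda : 'I_I.+1 -> R) (DeltaX : 'I_I.+1 -> 'I_J.+1 -> int).

Lemma clocks_state (X : 'I_J.+1 -> R) (x : 'I_J -> R) :
  (forall j : 'I_J, X (lift ord0 j) = x j * X ord0) ->
  forall i, clocks Ccoef X i = X ord0 * clocks Ccoef (xe x) i.
Proof.
move=> hx i; rewrite /clocks !big_ord_recl mulrDr mulr_sumr /xe unlift_none.
by congr (_ + _); [ring | apply: eq_bigr => k _; rewrite liftK hx; ring].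
Qed.

Lemma gamma_i_ge0 (X : 'I_J.+1 -> R) (x : 'I_J -> R) i :
  0 < lambda i -> 0 < X ord0 -> (forall j : 'I_J, X (lift ord0 j) = x j * X ord0) ->
  0 <= clocks Ccoef X i -> 0 <= gamma_i Ccoef lambda x i.
Proof.
move=> lambda0 X0 hx; rewrite (clocks_state hx) pmulr_rge0 // => clocks0.
by rewrite mulr_ge0 // ltW.
Qed.

Lemma ode_rhsE (x : 'I_J -> R) (j : 'I_J) :
  gamma Ccoef lambda x != 0 -> nu Ccoef lambda DeltaX x ord0 != 0 ->
  gamma Ccoef lambda x * nu Ccoef lambda DeltaX x ord0 *
    (xhat Ccoef lambda DeltaX x (lift ord0 j) - x j) =
  \sum_(i < I.+1) gamma_i Ccoef lambda x i *
    ((DeltaX i (lift ord0 j))%:~R - x j * (DeltaX i ord0)%:~R).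
Proof.
move=> g0 nu0.
have gamma_nu k : gamma Ccoef lambda x * nu Ccoef lambda DeltaX x k =
    \sum_(i < I.+1) (DeltaX i k)%:~R * gamma_i Ccoef lambda x i.
  by rewrite /nu mulr_sumr; apply: eq_bigr => i _; rewrite /p_i; field.
rewrite (_ : _ * (_ - _) = gamma Ccoef lambda x * nu Ccoef lambda DeltaX x (lift ord0 j)
    - x j * (gamma Ccoef lambda x * nu Ccoef lambda DeltaX x ord0)); last by rewrite /xhat; field.
by rewrite !gamma_nu mulr_sumr -sumrB; apply: eq_bigr => i _; ring.
Qed.

End mean_field.

Theorem theorem1
  (R : realType) (dsp : measure_display) (T : measurableType dsp)
  (P : probability T R)
  (I J : nat)
  (Ccoef : 'I_I.+1 -> 'I_J.+1 -> R) (lambda : 'I_I.+1 -> R)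
  (DeltaX : 'I_I.+1 -> 'I_J.+1 -> int)
  (x : 'I_J -> R)
  (diam Dt : nat -> R) (X : nat -> 'I_J.+1 -> nat)
  (N : nat -> 'I_I.+1 -> {RV P >-> R}) :
  (* rates of the clocks are positive *)
  (forall i, 0 < lambda i) ->
  (* the limit rho -> oo: d -> oo, Dt -> 0, Dt > 0, d * Dt constant *)
  diam @ \oo --> +oo ->
  Dt @ \oo --> 0 ->
  (forall rho, 0 < Dt rho) ->
  (exists kappa : R, forall rho, diam rho * Dt rho = kappa) ->
  (* X_j asymp d^2 *)
  (exists c : R, 0 < c /\ forall rho j,
      c^-1 * diam rho ^+ 2 <= (X rho j)%:R <= c * diam rho ^+ 2) ->
  (* the state at time t is x: x_j = X_j / X_0 *)
  (forall rho (j : 'I_J), (X rho (lift ord0 j))%:R = x j * (X rho ord0)%:R) ->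
  (* the numbers of clocks C_i = sum_j C_ij X_j are nonnegative *)
  (forall rho i, 0 <= clocks Ccoef (fun j => (X rho j)%:R) i) ->
  (* the mean-field quantities are well defined *)
  gamma Ccoef lambda x != 0 ->
  nu Ccoef lambda DeltaX x ord0 != 0 ->
  (* N rho i = number of micro-events of type R_i in [t, t + Dt]:
     superposition of C_i independent clocks of rate lambda_i *)
  (forall rho i, is_poisson (N rho i)
       (clocks Ccoef (fun j => (X rho j)%:R) i * lambda i * Dt rho)) ->
  (forall rho, mutually_independent (N rho)) ->
  forall j : 'I_J,
    let Xnew rho (k : 'I_J.+1) (w : T) : R :=
      (X rho k)%:R + \sum_(i < I.+1) N rho i w * (DeltaX i k)%:~R in
    cvg_in_prob P
      (fun rho w => (Xnew rho (lift ord0 j) w / Xnew rho ord0 w - x j) / Dt rho)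
      (gamma Ccoef lambda x * nu Ccoef lambda DeltaX x ord0 *
         (xhat Ccoef lambda DeltaX x (lift ord0 j) - x j)).
Proof.
move=> lambda_gt0 hdiam hDt Dt_gt0 [kap hkap] [c [c0 hX]] hx clocks_ge0 g0 nu0 hN _ j Xnew.
pose m rho : R := (X rho ord0)%:R; pose K rho := m rho * Dt rho.
pose gam := gamma_i Ccoef lambda x.
have clocksE rho := @clocks_state _ _ _ Ccoef (fun k => (X rho k)%:R) x (hx rho).
have meanE rho i : clocks Ccoef (fun k => (X rho k)%:R) i * lambda i * Dt rho = K rho * gam i.
  by rewrite clocksE /K /gam /gamma_i; ring.
have K_cvgy : K @ \oo --> +oo.
  by apply: cvgy_mul_of_sqr_le c0 hdiam Dt_gt0 hkap _ => rho; case/andP: (hX rho ord0).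
have K_gt0 : \forall rho \near \oo, 0 < K rho by exact: (cvgryPgt _).1 K_cvgy 0.
have m_gt0 rho : 0 < K rho -> 0 < m rho by rewrite pmulr_lgt0.
have gam_ge0 i : 0 <= gam i.
  have [rho _ /(_ rho (leqnn _)) /m_gt0 m_rho] := K_gt0.
  exact: gamma_i_ge0 (lambda_gt0 i) m_rho (hx rho) (clocks_ge0 rho i).
rewrite ode_rhsE //; apply: (@cvg_in_prob_transfer _ _ _ _ _ (fun i rho w => N rho i w / K rho) gam).
- by move=> i; apply: cvg_in_prob_poisson_ratio => // rho; rewrite -meanE.
- by move=> i rho; apply: measurable_funM => //; exact: measurable_funPT.
- by move=> rho; apply: measurable_count_quotient => i; exact: measurable_funPT.
move=> eps eps0; have [del del0 [D0 D00 approx]] := increment_quotient_approx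
  (fun i => (DeltaX i ord0)%:~R) (fun i => (DeltaX i (lift ord0 j))%:~R) gam (x j) eps0.
exists del => //; near=> rho => w close.
have K_rho : 0 < K rho by near: rho.
have XnewE k : Xnew rho k w = (X rho k)%:R +
    \sum_(i < I.+1) m rho * Dt rho * (N rho i w / K rho) * (DeltaX i k)%:~R.
  by congr (_ + _); apply: eq_bigr => i _; rewrite mulrCA divff ?mulr1 ?gt_eqF.
rewrite /= !XnewE hx; apply: approx => //; first exact: m_gt0.
near: rho; move/cvgr0Pnorm_lt: hDt => /(_ D0 D00); apply: filterS => rho.
by rewrite gtr0_norm.
Unshelve. all: end_near. Qed.
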